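(* Let $2\le k\le n-1$ and consider the circulant digraph $C_n(\{1,k\})$ with vertex set $\{v_0,\dots,v_{n-1}\}$. If $n\ge (k-1)\lceil n/k\rceil$, then for every $0\le i\le n-1$, $$d(v_0,v_i)=\left\lfloor \frac{i}{k}\right\rfloor + re(i,k),$$ and moreover $$\mathrm{diam}(C_n(\{1,k\}))=\left\lfloor\frac{n-1}{k}\right\rfloor+\max\{re(n-1,k),\,k-2\}.$$
   Context: For $n\ge 2$ and $S\subseteq\{1,\dots,n-1\}$, the circulant digraph $C_n(S)$ has vertex set $\{v_0,\dots,v_{n-1}\}$ and arcs $v_iv_j$ for all $i,j$ with $j-i\equiv s\pmod n$ for some $s\in S$. $d(x,y)$ denotes the length of a shortest directed $xy$-path and $\mathrm{diam}$ is the maximum of $d(x,y)$ over ordered pairs of vertices. For nonnegative integers $i$ and positive $k$, $re(i,k)$ denotes the remainder of $i$ modulo $k$ (in $\{0,\dots,k-1\}$). *)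

From mathcomp Require Import all_boot.
Set Implicit Arguments. Unset Strict Implicit. Unset Printing Implicit Defensive.

(* Circulant digraph C_n(S): vertex v_x is represented by the natural x < n.
   Arc v_x -> v_y iff y = (x + s) mod n for some s in S. *)
Definition circ_arc (n : nat) (S : seq nat) : rel nat :=
  fun x y => has (fun s => y == (x + s) %% n) S.

Definition circ_walk (n : nat) (S : seq nat) (x y l : nat) : Prop :=
  exists p : seq nat, [&& path (circ_arc n S) x p, last x p == y & size p == l].

Definition circ_dist_is (n : nat) (S : seq nat) (x y d : nat) : Prop :=
  circ_walk n S x y d /\ forall l, circ_walk n S x y l -> d <= l.

Definition circ_diam_is (n : nat) (S : seq nat) (D : nat) : Prop :=
  (forall x y, x < n -> y < n -> exists2 d, circ_dist_is n S x y d & d <= D) /\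
  (exists x y, [/\ x < n, y < n & circ_dist_is n S x y D]).

From mathcomp Require Import all_boot zify.
Set Implicit Arguments. Unset Strict Implicit. Unset Printing Implicit Defensive.

(* A walk using a arcs of length 1 and b arcs of length k leads from v_x to
   v_((x + a + b k) mod n), so d(v_0, v_j) is the least a + b with
   a + b k = j (mod n).  For a fixed value m = a + b k the sum a + b is least
   for the greedy choice b = m / k, giving m / k + re(m, k).  Replacing m by
   m + n raises m / k by some D <= ceil(n / k), so the greedy length grows by
   n - (k - 1) D >= n - (k - 1) ceil(n / k) >= 0: wrapping around the cycle
   never helps, and d(v_0, v_j) is the greedy length of j itself.  As the digraph is
   vertex-transitive, the diameter is the largest greedy length of a j < n,
   attained at j = n - 1 or at j = k ((n - 1) / k) - 1. *)

Definition greedy_len (k m : nat) := m %/ k + m %% k.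

Lemma greedy_len_min k a b : greedy_len k (a + b * k) <= a + b.
Proof.
rewrite /greedy_len; case: k => [|k]; first by rewrite divn0 modn0 muln0; lia.
set m := a + b * k.+1.
have hb : b <= m %/ k.+1 by rewrite leq_divRL // leq_addl.
have em := divn_eq m k.+1.
move: em hb; set Q := m %/ k.+1; set R := m %% k.+1 => em hb.
have [e eQ] : exists e, Q = b + e by exists (Q - b); lia.
rewrite eQ mulnDl in em *.
have : e <= e * k.+1 by rewrite leq_pmulr.
lia.
Qed.

Lemma greedy_len_modn k n m : 0 < k -> (k - 1) * ((n + k - 1) %/ k) <= n ->
  greedy_len k (m %% n) <= greedy_len k m.
Proof.
case: k => // k _; rewrite addnS !subn1 /=.
set c := (n + k) %/ k.+1 => hc.
have hn : n <= c * k.+1.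
  have := ltn_pmod (n + k) (ltn0Sn k); have := divn_eq (n + k) k.+1; rewrite -/c; lia.
rewrite /greedy_len.
have em := divn_eq m n; set t := m %/ n in em; set j := m %% n in em *.
have hq : m %/ k.+1 <= t * c + j %/ k.+1.
  rewrite -ltnS ltn_divLR // {1}em.
  have := ltn_pmod j (ltn0Sn k); have := divn_eq j k.+1.
  have : t * n <= t * (c * k.+1) by rewrite leq_mul2l hn orbT.
  nia.
have := divn_eq m k.+1; have := divn_eq j k.+1.
have : k * c * t <= n * t by rewrite leq_mul2r hc orbT.
nia.
Qed.

Section Walks.
Variables (n : nat) (S : seq nat).

Lemma circ_walk_refl x : circ_walk n S x x 0.
Proof. by exists [::]; rewrite /= eqxx. Qed.

Lemma circ_walk_step x s : s \in S -> circ_walk n S x ((x + s) %% n) 1.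
Proof.
move=> sS; exists [:: (x + s) %% n]; rewrite /= eqxx !andbT.
by apply/hasP; exists s.
Qed.

Lemma circ_walk_cat x y z l l' :
  circ_walk n S x y l -> circ_walk n S y z l' -> circ_walk n S x z (l + l').
Proof.
move=> [p /and3P [hp /eqP hy /eqP <-]] [q /and3P [hq /eqP hz /eqP <-]].
by exists (p ++ q); rewrite cat_path last_cat size_cat hp hy hq hz !eqxx.
Qed.

Lemma circ_walk_iter s c x : s \in S -> x < n -> circ_walk n S x ((x + c * s) %% n) c.
Proof.
move=> sS; elim: c x => [|c IHc] x xn.
  by rewrite mul0n addn0 modn_small //; apply: circ_walk_refl.
have n_gt0 : 0 < n by lia.
have := circ_walk_cat (circ_walk_step x sS) (IHc _ (ltn_pmod (x + s) n_gt0)).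
by rewrite modnDml -addnA -mulSn add1n.
Qed.
End Walks.

Section Circulant.
Variables n k : nat.
Local Notation S := [:: 1; k].

Lemma circ_walk_combination a b x :
  x < n -> circ_walk n S x ((x + a + b * k) %% n) (a + b).
Proof.
move=> xn; have n_gt0 : 0 < n by lia.
have := circ_walk_cat (circ_walk_iter a (mem_head 1 [:: k]) xn)
  (circ_walk_iter b (mem_last 1 [:: k]) (ltn_pmod (x + a * 1) n_gt0)).
by rewrite muln1 modnDml.
Qed.

Lemma circ_walk_combinationP x y l : circ_walk n S x y l ->
  exists a b, a + b = l /\ y %% n = (x + a + b * k) %% n.
Proof.
case=> p /and3P [+ /eqP <- /eqP <-]; elim: p x => [|z p IHp] x /=.
  by move=> _; exists 0, 0; rewrite !addn0.
case/andP; rewrite /circ_arc /= orbF => /orP zx /IHp [a [b [<- ->]]].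
case: zx => /eqP ->; rewrite -addnA modnDml.
- by exists a.+1, b; split; [|congr (_ %% _)]; lia.
- by exists a, b.+1; split; [|congr (_ %% _); rewrite mulSn]; lia.
Qed.

Lemma circ_dist_greedy_len x y : 0 < k -> (k - 1) * ((n + k - 1) %/ k) <= n ->
  x < n -> y < n -> circ_dist_is n S x y (greedy_len k ((y + n - x) %% n)).
Proof.
move=> k_gt0 hc xn yn; set j := (y + n - x) %% n.
have xyn : x + (y + n - x) = y + n by lia.
split.
  have := circ_walk_combination (j %% k) (j %/ k) xn.
  rewrite -addnA [j %% k + _]addnC -divn_eq /j modnDmr xyn modnDr modn_small //.
  by rewrite addnC.
move=> l /circ_walk_combinationP [a [b [<- hy]]].
have <- : (a + b * k) %% n = j.
  apply/eqP; rewrite -(eqn_modDl x) xyn modnDr addnA -hy.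
  by rewrite modn_small.
exact: leq_trans (greedy_len_modn _ k_gt0 hc) (greedy_len_min k a b).
Qed.
End Circulant.

Lemma greedy_len_le_diam k n j : 0 < k -> j < n ->
  greedy_len k j <= (n - 1) %/ k + maxn ((n - 1) %% k) (k - 2).
Proof.
move=> k_gt0 jn; rewrite /greedy_len.
have jn1 : j <= n - 1 by lia.
have := ltn_pmod j k_gt0.
have [lt_q|eq_q] : j %/ k < (n - 1) %/ k \/ j %/ k = (n - 1) %/ k.
  by have := leq_div2r k jn1; lia.
- lia.
- have := divn_eq j k; have := divn_eq (n - 1) k; rewrite eq_q; lia.
Qed.

Lemma greedy_len_diam_witness k n : 0 < k -> k <= n - 1 ->
  exists2 j, j < n & greedy_len k j = (n - 1) %/ k + maxn ((n - 1) %% k) (k - 2).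
Proof.
move=> k_gt0 kn; set Q := (n - 1) %/ k.
have Q_gt0 : 0 < Q by rewrite divn_gt0.
have Qkn : Q * k <= n - 1 by rewrite leq_divM.
case: (leqP (k - 2) ((n - 1) %% k)) => hR.
  by exists (n - 1); [lia | rewrite /greedy_len; lia].
exists ((Q - 1) * k + (k - 1)); first by rewrite mulnBl mul1n; lia.
rewrite /greedy_len divnMDl // modnMDl divn_small ?modn_small; lia.
Qed.

Theorem lemma8 (n k : nat) :
  2 <= k -> k <= n - 1 ->
  (k - 1) * ((n + k - 1) %/ k) <= n ->
  (forall i, i < n -> circ_dist_is n [:: 1; k] 0 i (i %/ k + i %% k)) /\
  circ_diam_is n [:: 1; k] ((n - 1) %/ k + maxn ((n - 1) %% k) (k - 2)).
Proof.
move=> k_ge2 kn hc.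
have k_gt0 : 0 < k by lia.
have n_gt0 : 0 < n by lia.
have dist_from0 i : i < n -> circ_dist_is n [:: 1; k] 0 i (greedy_len k i).
  move=> i_lt_n; have := circ_dist_greedy_len k_gt0 hc n_gt0 i_lt_n.
  by rewrite subn0 modnDr modn_small.
split=> //; split.
- move=> x y xn yn; exists (greedy_len k ((y + n - x) %% n)).
    exact: circ_dist_greedy_len.
  exact: greedy_len_le_diam (ltn_pmod _ n_gt0).
- have [j jn <-] := greedy_len_diam_witness k_gt0 kn.
  by exists 0, j; split=> //; apply: dist_from0.
Qed.
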